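(* Let $q$ be a prime power, $e\in\{0,1,2\}$, $r$ an integer ($r$ odd if $e\in\{0,2\}$, $r$ even if $e=1$), $N=q^{\frac{r+e+1}{2}}$, and let $\{\Sigma_1,\dots,\Sigma_{N+1}\}$ be a spread of a non-degenerate quadric $\mathcal Q_{r+2,e}$ of ${\rm PG}(r+2,q)$ with associated polarity $\perp$. Fix a point $P\in\Sigma_{N+1}$ and an $r$-space $H\subset P^\perp$ with $P\notin H$. Put $\mathcal Q_{r,e}=H\cap\mathcal Q_{r+2,e}$ and $\Pi_i=\langle P,\Sigma_i\rangle\cap H$ for $i=1,\dots,N$. Then: (i) if $e\in\{1,2\}$, then for $i\neq j$ the subspaces $\Pi_i$ and $\Pi_j$ meet in at most one point; (ii) if $e=0$ and $r\equiv 1\pmod 4$, then for $i\neq j$ the subspaces $\Pi_i$ and $\Pi_j$ have exactly one point in common; (iii) each point of $\mathcal Q_{r,e}\setminus\Sigma_{N+1}$ lies in exactly $q$ of the subspaces $\Pi_1,\dots,\Pi_N$.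
   Context: Notation: $\mathcal Q_{m,e}$ denotes a non-degenerate quadric of ${\rm PG}(m,q)$ which is hyperbolic $\mathcal Q^+(m,q)$ if $e=0$ ($m$ odd), parabolic $\mathcal Q(m,q)$ if $e=1$ ($m$ even), elliptic $\mathcal Q^-(m,q)$ if $e=2$ ($m$ odd). The polarity $\perp$ associated with the quadric is the one defined by the polar form of the quadratic form; for a point $P$ of the quadric, $P^\perp$ is the tangent hyperplane at $P$. A generator of $\mathcal Q_{m,e}$ is a projective subspace of maximal dimension contained in it; generators are $\frac{m-e-1}{2}$-dimensional. A spread of $\mathcal Q_{m,e}$ is a set of $q^{\frac{m+e-1}{2}}+1$ pairwise disjoint generators. An $s$-space means an $s$-dimensional projective subspace. *)

From mathcomp Require Import all_boot all_algebra.
Set Implicit Arguments. Unset Strict Implicit. Unset Printing Implicit Defensive.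
Import GRing.Theory.
Local Open Scope ring_scope.

(* Projective space PG(n-1,q) = subspaces of 'rV[F]_n, F a finite field of order q.
   A projective s-space is a row space (square matrix 'M_n) of rank s+1;
   a point is the row space of a nonzero row vector. *)

(* Quadratic form Q(x) = x A x^T (every quadratic form has this shape). *)
Definition qform (F : fieldType) (n : nat) (A : 'M[F]_n) (x : 'rV[F]_n) : F :=
  (x *m A *m x^T) 0 0.

(* Polar (symmetric bilinear) form of Q; the polarity perp is x |-> {y | polar x y = 0}. *)
Definition polar (F : fieldType) (n : nat) (A : 'M[F]_n) (x y : 'rV[F]_n) : F :=
  qform A (x + y) - qform A x - qform A y.

Definition nondeg_qform (F : fieldType) (n : nat) (A : 'M[F]_n) : Prop :=
  forall x : 'rV[F]_n, x != 0 -> qform A x = 0 -> exists y, polar A x y != 0.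

Definition tot_singular (F : fieldType) (n m : nat) (A : 'M[F]_n) (U : 'M[F]_(m, n)) : Prop :=
  forall x : 'rV[F]_n, (x <= U)%MS -> qform A x = 0.

(* Q_{n-1,e}: non-degenerate quadric of PG(n-1,q) whose generators
   (maximal subspaces contained in it) have vector dimension (n-e)/2,
   i.e. projective dimension (m-e-1)/2 with m = n-1. *)
Definition quadric_of_type (F : fieldType) (n : nat) (A : 'M[F]_n) (e : nat) : Prop :=
  [/\ nondeg_qform A,
      exists U : 'M[F]_n, tot_singular A U /\ \rank U = ((n - e) %/ 2)%N
    & forall U : 'M[F]_n, tot_singular A U -> (\rank U <= (n - e) %/ 2)%N].

Definition generator (F : fieldType) (n : nat) (A : 'M[F]_n) (e : nat) (U : 'M[F]_n) : Prop :=
  tot_singular A U /\ \rank U = ((n - e) %/ 2)%N.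

Definition is_spread (F : fieldType) (n : nat) (A : 'M[F]_n) (e k : nat)
  (Sigma : 'I_k -> 'M[F]_n) : Prop :=
  (forall i, generator A e (Sigma i)) /\
  (forall i j, i != j -> (Sigma i :&: Sigma j == (0 : 'M[F]_n))%MS).

Definition spreadN (F : finFieldType) (r e : nat) : nat :=
  (#|F| ^ ((r + e + 1) %/ 2))%N.

(* Splitting off hyperbolic planes shows that a non-degenerate
   quadric of PG(2g+e-1, q) with generators of vector dimension g has exactly
   (q^g - 1)(q^(g+e-1) + 1) nonzero singular vectors; the N + 1 pairwise
   disjoint generators of a spread already contain that many, so every
   singular point lies in exactly one Sigma_i.
   (iii) For a singular x in H outside Sigma_{N+1}, the line <P, x> is totally
   singular; its q points other than P lie in q distinct generators
   Sigma_i (i <= N), and these are exactly the i with x in Pi_i.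
   (i) Since Sigma_i and Sigma_j are disjoint, <P, Sigma_i> and <P, Sigma_j>
   meet in at most a line through P, whose trace on H is at most a point.
   (ii) For e = 0, N = q^(g-1) and each Pi_i has dimension at least g - 2.
   Counting the pairs (x, k) with x in Pi_i and x in Pi_k, k != i, by (iii)
   and by (i) forces every Pi_i to meet every Pi_k in a point. *)

From mathcomp Require Import all_boot all_algebra mxabelem.
From mathcomp Require Import zify ring.
Set Implicit Arguments. Unset Strict Implicit. Unset Printing Implicit Defensive.
Import GRing.Theory.
Local Open Scope ring_scope.

Section PolarForm.
Variables (F : fieldType) (n : nat) (A : 'M[F]_n).
Implicit Types x y z : 'rV[F]_n.

Local Definition bform x y := (x *m A *m y^T) 0 0.

Local Lemma bformDl x y z : bform (x + y) z = bform x z + bform y z.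
Proof. by rewrite /bform !mulmxDl mxE. Qed.
Local Lemma bformDr x y z : bform z (x + y) = bform z x + bform z y.
Proof. by rewrite /bform linearD /= mulmxDr mxE. Qed.
Local Lemma bformZl a x z : bform (a *: x) z = a * bform x z.
Proof. by rewrite /bform -!scalemxAl mxE. Qed.
Local Lemma bformZr a x z : bform z (a *: x) = a * bform z x.
Proof. by rewrite /bform linearZ /= -scalemxAr mxE. Qed.

Local Lemma qform_bform x : qform A x = bform x x. Proof. by []. Qed.

Local Lemma polarE x y : polar A x y = bform x y + bform y x.
Proof. rewrite /polar !qform_bform bformDl !bformDr; ring. Qed.

Lemma polarC x y : polar A x y = polar A y x.
Proof. by rewrite !polarE addrC. Qed.
Lemma polarDl x y z : polar A (x + y) z = polar A x z + polar A y z.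
Proof. rewrite !polarE bformDl bformDr; ring. Qed.
Lemma polarDr x y z : polar A z (x + y) = polar A z x + polar A z y.
Proof. by rewrite polarC polarDl !(polarC z). Qed.
Lemma polarZl a x z : polar A (a *: x) z = a * polar A x z.
Proof. rewrite !polarE bformZl bformZr; ring. Qed.
Lemma polarZr a x z : polar A z (a *: x) = a * polar A z x.
Proof. by rewrite polarC polarZl polarC. Qed.
Lemma polarNl x z : polar A (- x) z = - polar A x z.
Proof. by rewrite -scaleN1r polarZl mulN1r. Qed.
Lemma polarNr x z : polar A z (- x) = - polar A z x.
Proof. by rewrite polarC polarNl polarC. Qed.
Lemma polarxx x : polar A x x = 2 * qform A x.
Proof. rewrite polarE qform_bform; ring. Qed.

Lemma polarM x y : polar A x y = (x *m (A + A^T) *m y^T) 0 0.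
Proof.
rewrite polarE /bform.
have -> : (y *m A *m x^T) 0 0 = ((y *m A *m x^T)^T) 0 0 by rewrite [RHS]mxE.
by rewrite !trmx_mul trmxK mulmxA mulmxDr mulmxDl [RHS]mxE.
Qed.

Lemma qformD x y : qform A (x + y) = qform A x + qform A y + polar A x y.
Proof. rewrite /polar; ring. Qed.
Lemma qformZ a x : qform A (a *: x) = a ^+ 2 * qform A x.
Proof. rewrite !qform_bform bformZl bformZr; ring. Qed.
Lemma qform0 : qform A 0 = 0.
Proof. by rewrite /qform !mul0mx mxE. Qed.

Lemma tot_singular_polar m (U : 'M[F]_(m, n)) x y :
  tot_singular A U -> (x <= U)%MS -> (y <= U)%MS -> polar A x y = 0.
Proof. by move=> sU xU yU; rewrite /polar !sU ?subr0 ?addmx_sub. Qed.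

End PolarForm.

Section RowSpaces.
Variables (F : fieldType) (n : nat).
Implicit Types (v x : 'rV[F]_n).

Lemma mxrank_adds_rV m v (U : 'M[F]_(m, n)) :
  ~~ (v <= U)%MS -> \rank (v + U)%MS = (\rank U).+1.
Proof.
move=> vU; have ltU : (U < v + U)%MS.
  by rewrite ltmxE addsmxSr addsmx_sub submx_refl andbT.
have [le_vU _] := mxrank_adds_leqif v U.
have := rank_ltmx ltU; have := rank_leq_row v; lia.
Qed.

Lemma sub_adds_rV m v (U : 'M[F]_(m, n)) x :
  (x <= v + U)%MS -> exists c s, x = c *: v + s /\ (s <= U)%MS.
Proof.
case/sub_addsmxP=> [[u1 u2]] /= ->.
exists (u1 0 0), (u2 *m U); split; last exact: submxMl.
by rewrite {1}(mx11_scalar u1) mul_scalar_mx.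
Qed.

Lemma adds_rV_sub m v (U : 'M[F]_(m, n)) c s :
  (s <= U)%MS -> ((c *: v + s)%R <= v + U)%MS.
Proof. exact: addmx_sub_adds (scalemx_sub c (submx_refl v)). Qed.

Lemma cap0_sub_eq0 m1 m2 (U1 : 'M[F]_(m1, n)) (U2 : 'M[F]_(m2, n)) x :
  (U1 :&: U2 == (0 : 'M[F]_n))%MS -> (x <= U1)%MS -> (x <= U2)%MS -> x = 0.
Proof.
move=> /andP[U12_0 _] xU1 xU2; apply/eqP; rewrite -submx0.
by apply: submx_trans U12_0; rewrite sub_capmx xU1.
Qed.

Lemma mxrank_cap_adds_rV v (S H V : 'M[F]_n) :
  ~~ (v <= H)%MS -> (V <= (v + S) :&: H)%MS ->
  (\rank V <= \rank ((v + V) :&: S))%N.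
Proof.
move=> vH VvSH; have VH : (V <= H)%MS := submx_trans VvSH (capmxSr _ _).
have vV : ~~ (v <= V)%MS by apply: contra vH => vV; apply: submx_trans VH.
have sub_vS : (v + V + S <= v + S)%MS.
  rewrite !addsmx_sub addsmxSl addsmxSr andbT /=.
  exact: submx_trans VvSH (capmxSl _ _).
have := mxrank_sum_cap (v + V)%MS S; have := mxrankS sub_vS.
have [le_vS _] := mxrank_adds_leqif v S.
have := mxrank_adds_rV vV; have := rank_leq_row v; lia.
Qed.

Lemma mxrank_cap_cones_le1 v (S1 S2 H : 'M[F]_n) :
  ~~ (v <= H)%MS -> (S1 :&: S2 == (0 : 'M[F]_n))%MS ->
  (\rank (((v + S1) :&: H) :&: ((v + S2) :&: H))%MS <= 1)%N.
Proof.
move=> vH S12_0; set V := (_ :&: _)%MS; set W := (v + V)%MS.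
have vV : ~~ (v <= V)%MS.
  by apply: contra vH => vV; apply: submx_trans vV (submx_trans (capmxSl _ _) (capmxSr _ _)).
have rW : \rank W = (\rank V).+1 := mxrank_adds_rV vV.
have le1 : (\rank V <= \rank (W :&: S1))%N := mxrank_cap_adds_rV vH (capmxSl _ _).
have le2 : (\rank V <= \rank (W :&: S2))%N := mxrank_cap_adds_rV vH (capmxSr _ _).
have disj : \rank (W :&: S1 :&: (W :&: S2))%MS = 0%N.
  apply/eqP; rewrite mxrank_eq0 -submx0; case/andP: S12_0 => S12_0 _.
  apply: submx_trans S12_0; rewrite sub_capmx.
  by apply/andP; split; apply: submx_trans (capmxSr _ _); [apply: capmxSl | apply: capmxSr].
have := mxrank_sum_cap (W :&: S1)%MS (W :&: S2)%MS.
have : (\rank (W :&: S1 + W :&: S2)%MS <= \rank W)%N.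
  by apply: mxrankS; rewrite addsmx_sub !capmxSl.
lia.
Qed.

End RowSpaces.

Lemma card_set_sum (T : finType) (P Q : pred T) :
  #|[set t | P t && Q t]| = (\sum_(t | P t) Q t)%N.
Proof.
rewrite -sum1dep_card big_mkcond [RHS]big_mkcond /=.
by apply: eq_bigr => t _; case: (P t); case: (Q t).
Qed.

Lemma sum_bool_card (T : finType) (P : pred T) :
  (\sum_(t : T) (P t : nat) = #|[set t | P t]|)%N.
Proof. by rewrite -sum1dep_card [RHS]big_mkcond /=; apply: eq_bigr => t _; case: (P t). Qed.

Lemma sum_ubound_eq (T : finType) (S : {set T}) (c : T -> nat) b :
  (forall t, t \in S -> c t <= b)%N -> (#|S| * b <= \sum_(t in S) c t)%N ->
  forall t, t \in S -> c t = b.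
Proof.
move=> c_le_b sum_ge t St.
have sum_gap : (\sum_(t in S) (b - c t) + \sum_(t in S) c t = #|S| * b)%N.
  rewrite -big_split /= -sum1_card big_distrl /=.
  by apply: eq_bigr => u Su; rewrite mul1n subnK ?c_le_b.
have : (\sum_(t in S) (b - c t) == 0)%N by apply/eqP; lia.
rewrite sum_nat_eq0 => /forallP /(_ t); rewrite St /= subn_eq0 => b_le_c.
by apply/eqP; rewrite eqn_leq c_le_b.
Qed.

Lemma double_count (I T : finType) (A : {set I}) (B : {set T}) (R : I -> T -> bool) :
  (\sum_(i in A) #|[set t in B | R i t]| = \sum_(t in B) #|[set i in A | R i t]|)%N.
Proof.
under eq_bigr do rewrite card_set_sum.
by rewrite exchange_big /=; apply: eq_bigr => t _; rewrite card_set_sum.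
Qed.

Section FinFieldCounting.
Variable F : finFieldType.
Local Notation q := #|F|.

Lemma card_rowgD1 n m (U : 'M[F]_(m, n)) : #|rowg U :\ 0| = (q ^ \rank U - 1)%N.
Proof. by rewrite -card_rowg [in RHS](cardsD1 0) mem_rowg sub0mx add1n subn1. Qed.

Definition qzeros n (A : 'M[F]_n) := [set x : 'rV[F]_n | qform A x == 0].


Lemma card_hyperbolic_zeros (V : finType) (f : V -> F) :
  #|[set t : (F * F) * V | t.1.1 * t.1.2 + f t.2 == 0]| =
  (q * #|[set w | (f w == 0)%R]| + (q - 1) * #|V|)%N.
Proof.
rewrite -[LHS]sum_bool_card.
rewrite -(pair_bigA _ (fun ab w => ((ab.1 * ab.2 + f w == 0)%R : nat))) /=.
rewrite -(pair_bigA _ (fun a b => (\sum_w ((a * b + f w == 0)%R : nat))%N)) /=.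
rewrite (bigD1 0) //=; congr (_ + _)%N.
  under eq_bigr => b _ do under eq_bigr => w _ do rewrite mul0r add0r.
  by rewrite sum_nat_const sum_bool_card.
rewrite (eq_bigr (fun _ => #|V|)); last first.
  move=> a a0; rewrite exchange_big /= -[RHS]sum1_card; apply: eq_bigr => w _.
  rewrite sum_bool_card (_ : [set b | _] = [set - f w / a]) ?cards1 //.
  by apply/setP => b; rewrite !inE addr_eq0; apply/eqP/eqP => [<- | ->]; field.
by rewrite sum_nat_const cardC1 subn1.
Qed.

End FinFieldCounting.

Lemma hyperbolic_partner (F : fieldType) m (A : 'M[F]_m) p :
  nondeg_qform A -> p != 0 -> qform A p = 0 ->
  exists p', qform A p' = 0 /\ polar A p p' = 1.
Proof.
move=> ndA p0 Qp; have [y py] := ndA p p0 Qp.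
set y1 := (polar A p y)^-1 *: y.
have py1 : polar A p y1 = 1 by rewrite polarZr mulVf.
clearbody y1; have pp : polar A p p = 0 by rewrite polarxx Qp mulr0.
exists (y1 + (- qform A y1) *: p); split.
  by rewrite qformD qformZ Qp mulr0 addr0 polarZr polarC py1 mulr1 addrN.
by rewrite polarDr py1 polarZr pp mulr0 addr0.
Qed.

Lemma mx11_eq0 (F : fieldType) (a : 'M[F]_1) : (a == 0) = (a 0 0 == 0).
Proof.
apply/eqP/eqP => [->|a00]; first by rewrite mxE.
by apply/matrixP => i j; rewrite !ord1 a00 mxE.
Qed.

Section HyperbolicSplit.
Variables (F : finFieldType) (m : nat) (A : 'M[F]_m) (p p' : 'rV[F]_m).
Hypotheses (Qp : qform A p = 0) (Qp' : qform A p' = 0) (pp' : polar A p p' = 1).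
Local Notation q := #|F|.

Let pp : polar A p p = 0. Proof. by rewrite polarxx Qp mulr0. Qed.
Let p'p' : polar A p' p' = 0. Proof. by rewrite polarxx Qp' mulr0. Qed.
Let p'p : polar A p' p = 1. Proof. by rewrite polarC. Qed.

Definition hyp_perp := kermx (row_mx ((A + A^T) *m p^T) ((A + A^T) *m p'^T)).
Local Notation m' := (\rank hyp_perp).
Definition hyp_basis : 'M[F]_(m', m) := row_base hyp_perp.
Definition hyp_form : 'M[F]_m' := hyp_basis *m A *m hyp_basis^T.

Lemma sub_hyp_basis x :
  (x <= hyp_basis)%MS = (polar A x p == 0) && (polar A x p' == 0).
Proof.
rewrite eq_row_base (sameP sub_kermxP eqP) mul_mx_row row_mx_eq0.
by rewrite !mx11_eq0 !mulmxA -!polarM.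
Qed.

Lemma hyp_basis_perp w :
  polar A (w *m hyp_basis) p = 0 /\ polar A (w *m hyp_basis) p' = 0.
Proof. by have := submxMl w hyp_basis; rewrite sub_hyp_basis => /andP[/eqP ? /eqP ?]. Qed.

Lemma qform_hyp_form w : qform hyp_form w = qform A (w *m hyp_basis).
Proof. by rewrite /qform /hyp_form [(w *m _)^T]trmx_mul !mulmxA. Qed.

Lemma polar_hyp_form w v : polar hyp_form w v = polar A (w *m hyp_basis) (v *m hyp_basis).
Proof. by rewrite /polar !qform_hyp_form mulmxDl. Qed.

Definition hyp_proj z := z - polar A z p' *: p - polar A z p *: p'.

Lemma hyp_proj_sub z : (hyp_proj z <= hyp_basis)%MS.
Proof.
rewrite sub_hyp_basis /hyp_proj !polarDl !polarNl !polarZl pp p'p pp' p'p'.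
by apply/andP; split; apply/eqP; ring.
Qed.

(* Coordinates in the decomposition F^m = <p, p'> (+) <p, p'>^perp. *)
Definition hyp_coord (t : (F * F) * 'rV[F]_m') : 'rV[F]_m :=
  t.1.1 *: p + t.1.2 *: p' + t.2 *m hyp_basis.
Definition hyp_uncoord z : (F * F) * 'rV[F]_m' :=
  ((polar A z p', polar A z p), hyp_proj z *m pinvmx hyp_basis).

Lemma hyp_uncoordK : cancel hyp_uncoord hyp_coord.
Proof.
move=> z; rewrite /hyp_coord /= mulmxKpV ?hyp_proj_sub // /hyp_proj.
by rewrite -[z - _ - _]addrA -opprD subrKC.
Qed.

Lemma hyp_coordK : cancel hyp_coord hyp_uncoord.
Proof.
case=> [[a b] w]; have [wp wp'] := hyp_basis_perp w.
have Ep' : polar A (hyp_coord (a, b, w)) p' = a.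
  by rewrite /hyp_coord !polarDl !polarZl pp' p'p' wp' mulr1 mulr0 !addr0.
have Ep : polar A (hyp_coord (a, b, w)) p = b.
  by rewrite /hyp_coord !polarDl !polarZl pp p'p wp mulr1 mulr0 add0r addr0.
rewrite /hyp_uncoord Ep' Ep; congr (_, _).
apply: (row_free_inj (row_base_free hyp_perp)); rewrite /= mulmxKpV ?hyp_proj_sub //.
by rewrite /hyp_proj Ep' Ep /hyp_coord /= -[_ - _ - _]addrA -opprD [_ + w *m _]addrC addrK.
Qed.

Lemma qform_hyp_coord t : qform A (hyp_coord t) = t.1.1 * t.1.2 + qform hyp_form t.2.
Proof.
have [wp wp'] := hyp_basis_perp t.2.
rewrite /hyp_coord !qformD !qformZ Qp Qp' qform_hyp_form !polarDl !polarZl.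
rewrite !polarZr pp' [polar A p _]polarC [polar A p' _]polarC wp wp'; ring.
Qed.

Lemma hyp_dim : m = m'.+2.
Proof.
have := bij_eq_card (Bijective hyp_coordK hyp_uncoordK).
rewrite !card_prod !card_mx !mul1n -mulnA -!expnS => /eqP.
by rewrite eqn_exp2l ?card_finNzRing_gt1 // => /eqP.
Qed.

Lemma nondeg_hyp_form : nondeg_qform A -> nondeg_qform hyp_form.
Proof.
move=> ndA w w0 Qw.
have wM0 : w *m hyp_basis != 0.
  apply: contra w0 => /eqP wM0; apply/eqP/(row_free_inj (row_base_free hyp_perp)).
  by rewrite wM0 mul0mx.
have [z zw] := ndA _ wM0 (etrans (esym (qform_hyp_form w)) Qw).
exists (hyp_proj z *m pinvmx hyp_basis).
have [wp wp'] := hyp_basis_perp w.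
rewrite polar_hyp_form mulmxKpV ?hyp_proj_sub // /hyp_proj.
by rewrite !polarDr !polarNr !polarZr wp wp' !mulr0 !subr0.
Qed.

Lemma card_qzeros_hyp_split :
  #|qzeros A| = (q * #|qzeros hyp_form| + (q - 1) * q ^ m')%N.
Proof.
have -> : qzeros A = hyp_coord @: [set t | qform A (hyp_coord t) == 0].
  apply/setP => x; rewrite inE; apply/idP/imsetP => [Qx|[t]].
    by exists (hyp_uncoord x); rewrite ?inE hyp_uncoordK.
  by rewrite inE => Qt ->.
rewrite card_imset; last exact: can_inj hyp_coordK.
under eq_finset => t do rewrite qform_hyp_coord.
by rewrite card_hyperbolic_zeros card_mx mul1n.
Qed.

Lemma lift_hyp_singular (U' : 'M[F]_m') : tot_singular hyp_form U' ->
  exists U : 'M[F]_m, tot_singular A U /\ \rank U = (\rank U').+1.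
Proof.
move=> sU'; have pU : ~~ (p <= U' *m hyp_basis)%MS.
  apply/negP => /submx_trans/(_ (submxMl U' hyp_basis)).
  by rewrite sub_hyp_basis pp' oner_eq0 andbF.
exists <<(p + U' *m hyp_basis)%MS>>%MS; split; last first.
  by rewrite genmxE mxrank_adds_rV // mxrankMfree ?row_base_free.
move=> x; rewrite genmxE => /sub_adds_rV [c [s [-> sU]]].
have [w ->] : exists w, s = w *m U' *m hyp_basis.
  by exists (s *m pinvmx (U' *m hyp_basis)); rewrite -mulmxA mulmxKpV.
have [wp _] := hyp_basis_perp (w *m U').
rewrite qformD qformZ Qp mulr0 add0r -qform_hyp_form sU' ?submxMl // add0r.
by rewrite polarZl polarC wp mulr0.
Qed.

Lemma restrict_hyp_singular (U : 'M[F]_m) : tot_singular A U -> (p <= U)%MS ->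
  exists U' : 'M[F]_m', tot_singular hyp_form U' /\ (\rank U <= (\rank U').+1)%N.
Proof.
move=> sU pU; set X := (U :&: hyp_basis)%MS.
have XM : (X <= hyp_basis)%MS by apply: capmxSr.
exists <<X *m pinvmx hyp_basis>>%MS; split.
  move=> v; rewrite genmxE => /submxP [u ->].
  rewrite qform_hyp_form -mulmxA mulmxKpV //.
  by apply: sU; apply: submx_trans (submxMl _ _) (capmxSl _ _).
have rX : (\rank X <= \rank (X *m pinvmx hyp_basis))%N.
  by rewrite -{1}(mulmxKpV XM) mxrankM_maxl.
(* u - (polar u p') p is orthogonal to p' and, as U is totally singular, to p. *)
have UpX : (U <= p + X)%MS.
  apply/row_subP => i; set u := row i U; have uU : (u <= U)%MS by apply: row_sub.
  rewrite -(subrK (polar A u p' *: p) u) addrC; apply: adds_rV_sub.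
  rewrite sub_capmx addmx_sub ?eqmx_opp ?scalemx_sub //= sub_hyp_basis.
  rewrite !polarDl !polarNl !polarZl pp pp' (tot_singular_polar sU uU pU).
  by rewrite mulr0 mulr1 subr0 subrr !eqxx.
have [le_pX _] := mxrank_adds_leqif p X.
have := mxrankS UpX; have := rank_leq_row p; rewrite genmxE; lia.
Qed.

End HyperbolicSplit.

Lemma qzeros_anisotropic (F : finFieldType) m (A : 'M[F]_m) :
  (forall U : 'M[F]_m, tot_singular A U -> \rank U = 0%N) -> qzeros A = [set 0].
Proof.
move=> anisoA; apply/setP => x; rewrite !inE.
apply/idP/eqP => [/eqP Qx | ->]; last by rewrite qform0.
have sx : tot_singular A <<x>>%MS.
  by move=> y; rewrite genmxE => /sub_rVP [a ->]; rewrite qformZ Qx mulr0.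
by have := anisoA _ sx; rewrite mxrank_gen rank_rV; case: (x =P 0).
Qed.

(* With q = #|F|, this says #|qzeros A| = q^(2k+e-1) + q^k - q^(k+e-1); it is
   multiplied by q to avoid subtractions. *)
Lemma card_qzeros_witt (F : finFieldType) k : forall m (A : 'M[F]_m) e,
  m = (2 * k + e)%N -> nondeg_qform A ->
  (exists U : 'M[F]_m, tot_singular A U /\ (k <= \rank U)%N) ->
  (forall U : 'M[F]_m, tot_singular A U -> (\rank U <= k)%N) ->
  (#|F| * #|qzeros A| + #|F| ^ (k + e) = #|F| ^ k * #|F| ^ (k + e) + #|F| ^ k * #|F|)%N.
Proof.
elim: k => [|k IHk] m A e dimA ndA [U [sU rU]] witt.
  have anisoA (V : 'M[F]_m) : tot_singular A V -> \rank V = 0%N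
    by move=> sV; have := witt V sV; rewrite leqn0 => /eqP.
  by rewrite qzeros_anisotropic // cards1 addnC !mul1n muln1.
have U0 : U != 0 by rewrite -mxrank_eq0 -lt0n (leq_trans _ rU).
have [i Ui0] : exists i, row i U != 0.
  apply/existsP; apply: contraR U0; rewrite negb_exists => /forallP U0.
  by apply/eqP/row_matrixP => i; rewrite row0; apply/eqP/negbNE/U0.
set p := row i U in Ui0.
have Qp : qform A p = 0 by apply: sU; apply: row_sub.
have [p' [Qp' pp']] := hyperbolic_partner ndA Ui0 Qp.
set A' := hyp_form A p p'.
have dimA' : \rank (hyp_perp A p p') = (2 * k + e)%N by have := hyp_dim Qp Qp' pp'; lia.
have singA' : exists U' : 'M_(\rank (hyp_perp A p p')), tot_singular A' U' /\ (k <= \rank U')%N.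
  have [U' [sU' rU']] := restrict_hyp_singular Qp pp' sU (row_sub i U).
  by exists U'; split => //; lia.
have wittA' (V' : 'M_(\rank (hyp_perp A p p'))) : tot_singular A' V' -> (\rank V' <= k)%N.
  by case/(lift_hyp_singular Qp pp') => V [/witt + rV]; rewrite rV.
have := IHk _ A' e dimA' (nondeg_hyp_form Qp Qp' pp' ndA) singA' wittA'.
rewrite (card_qzeros_hyp_split Qp Qp' pp') -/A'.
have -> : (#|F| ^ \rank (hyp_perp A p p') = #|F| ^ k * #|F| ^ (k + e))%N.
  by rewrite -expnD dimA'; congr expn; lia.
have q_gt1 := card_finNzRing_gt1 F.
rewrite addSn !expnS.
move: q_gt1 #|qzeros A'| (#|F| ^ k)%N (#|F| ^ (k + e))%N => + z a c.
by case: #|F| => // q _; rewrite subSS subn0; nia.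
Qed.

Lemma spread_type_dims r e : (e <= 2)%N -> odd r = (e != 1%N) ->
  (r + 3 = 2 * ((r + 3 - e) %/ 2) + e)%N /\
  ((r + e + 1) %/ 2 = ((r + 3 - e) %/ 2).-1 + e)%N.
Proof.
move=> e_le2 r_odd; have := odd_double_half r; rewrite r_odd -muln2.
by case: e e_le2 r_odd => [|[|[|e]]] //= _ _ rE; split; lia.
Qed.

Section SpreadProjection.
Variables (F : finFieldType) (e r : nat).
Variables (A : 'M[F]_(r + 3)) (Sigma : 'I_((spreadN F r e).+1) -> 'M[F]_(r + 3)).
Variables (p : 'rV[F]_(r + 3)) (H : 'M[F]_(r + 3)).
Hypotheses (e_le2 : (e <= 2)%N) (r_odd : odd r = (e != 1%N)).
Hypotheses (typeA : quadric_of_type A e) (spreadS : is_spread A e Sigma).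
Hypotheses (p0 : p != 0) (pSmx : (p <= Sigma ord_max)%MS).
Hypotheses (rankH : \rank H = r.+1) (H_perp_p : forall x, (x <= H)%MS -> polar A p x = 0).
Hypothesis pH : ~~ (p <= H)%MS.

Local Notation N := (spreadN F r e).
Local Notation q := #|F|.
Local Notation g := ((r + 3 - e) %/ 2)%N.
Local Notation mx := (@ord_max N).
Implicit Types (x y : 'rV[F]_(r + 3)) (i j k : 'I_N.+1).

Definition spread_proj i := ((p + Sigma i) :&: H)%MS.

Lemma spread_generator i : tot_singular A (Sigma i) /\ \rank (Sigma i) = g.
Proof. by case: spreadS => gen _; have [] := gen i. Qed.

Lemma spread_eq0 i j x : i != j -> (x <= Sigma i)%MS -> (x <= Sigma j)%MS -> x = 0.
Proof. by case: spreadS => _ disj ij xi xj; apply: cap0_sub_eq0 (disj _ _ ij) xi xj. Qed.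

Lemma p_notin_spread i : i != mx -> ~~ (p <= Sigma i)%MS.
Proof. by move=> imx; apply: contra p0 => pSi; rewrite (spread_eq0 imx pSi pSmx). Qed.

Lemma qform_p : qform A p = 0.
Proof. by have [sSmx _] := spread_generator mx; apply: sSmx. Qed.

Lemma card_nz_qzeros : #|qzeros A :\ 0| = (N.+1 * (q ^ g - 1))%N.
Proof.
have [dimA dimN] := spread_type_dims e_le2 r_odd.
have [ndA [U [sU rU]] witt] := typeA.
have := card_qzeros_witt dimA ndA (ex_intro _ U (conj sU (eq_leq (esym rU)))) witt.
have -> : (q ^ (g + e) = q * N)%N by rewrite /spreadN dimN -expnS; congr expn; lia.
rewrite [in #|qzeros A|](cardsD1 0) inE qform0 eqxx /=.
have q_gt0 : (0 < q)%N := ltnW (card_finNzRing_gt1 F).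
have : (0 < q ^ g)%N by rewrite expn_gt0 q_gt0.
move: (q ^ g)%N #|_ :\ 0| => a Z a_gt0; move: q q_gt0 => q' q'_gt0 E.
have {E} : (1 + Z + N = a * N + a)%N.
  by apply/eqP; rewrite -(eqn_pmul2l q'_gt0); apply/eqP; lia.
nia.
Qed.

Lemma spread_cover x : x != 0 -> qform A x = 0 -> exists i, (x <= Sigma i)%MS.
Proof.
move=> x0 Qx; pose c y := #|[set i in setT | (y <= Sigma i)%MS]|.
have c_le1 y : y \in qzeros A :\ 0 -> (c y <= 1)%N.
  rewrite !inE => /andP[y0 _]; apply/card_le1_eqP => i j; rewrite !inE /= => yi yj.
  by apply/eqP; apply: contraTT y0 => ij; rewrite negbK (spread_eq0 ij yj yi).
have sum_c : (#|qzeros A :\ 0%R| * 1 <= \sum_(y in qzeros A :\ 0%R) c y)%N.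
  rewrite muln1 card_nz_qzeros -double_count.
  rewrite (eq_bigr (fun=> (q ^ g - 1)%N)) ?sum_nat_const ?cardsT ?card_ord // => i _.
  have [sSi rSi] := spread_generator i.
  rewrite -rSi -card_rowgD1; apply: eq_card => y.
  by rewrite !inE -andbA; case: (y <= Sigma i)%MS /idP => [/sSi ->|]; rewrite ?eqxx ?andbF.
have : c x = 1%N by apply: (sum_ubound_eq c_le1 sum_c); rewrite !inE x0 Qx eqxx.
by case/eqP/cards1P => i /setP/(_ i); rewrite !inE eqxx => xi; exists i.
Qed.

Definition spread_index y := odflt mx [pick i | (y <= Sigma i)%MS].

Lemma spread_indexE i y : y != 0 -> (y <= Sigma i)%MS -> spread_index y = i.
Proof.
move=> y0 yi; rewrite /spread_index; case: pickP => [j /= yj | /(_ i)]; last by rewrite yi.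
by apply: contraTeq y0 => ji; rewrite negbK (spread_eq0 ji yj yi).
Qed.

Lemma sub_spread_index y : y != 0 -> qform A y = 0 -> (y <= Sigma (spread_index y))%MS.
Proof. by move=> y0 Qy; have [i yi] := spread_cover y0 Qy; rewrite (spread_indexE y0 yi). Qed.

(* The totally singular line <p, x> has q points besides p, lying in distinct
   generators Sigma_i, i != mx; these i are exactly those with x in Pi_i. *)
Lemma card_spread_proj_through x :
  x != 0 -> (x <= H)%MS -> qform A x = 0 -> ~~ (x <= Sigma mx)%MS ->
  #|[set i | (i != mx) && (x <= spread_proj i)%MS]| = q.
Proof.
move=> x0 xH Qx xSmx; pose v l := l *: p + x.
have xE l : x = (- l) *: p + v l by rewrite scaleNr addKr.
have v0 l : v l != 0.
  by apply: contra xSmx => /eqP vl0; rewrite (xE l) vl0 addr0 scalemx_sub.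
have Qv l : qform A (v l) = 0.
  by rewrite qformD qformZ qform_p mulr0 add0r Qx add0r polarZl H_perp_p // mulr0.
pose f l := spread_index (v l).
have vf l : (v l <= Sigma (f l))%MS := sub_spread_index (v0 l) (Qv l).
have f_mx l : f l != mx.
  apply: contraNneq xSmx => flmx.
  by rewrite (xE l) addmx_sub ?scalemx_sub // -flmx.
have f_inj : injective f.
  move=> l1 l2 f12; apply/eqP; rewrite -subr_eq0.
  apply: contraR (p_notin_spread (f_mx l1)) => l12; rewrite -(scalerK l12 p) scalemx_sub //.
  have -> : (l1 - l2) *: p = v l1 - v l2 by rewrite scalerBl opprD addrACA subrr addr0.
  by rewrite addmx_sub ?eqmx_opp // f12.
have -> : [set i | (i != mx) && (x <= spread_proj i)%MS] = f @: setT.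
  apply/setP => i; rewrite inE; apply/andP/imsetP => [[imx] | [l _ ->]].
    rewrite sub_capmx => /andP[/sub_adds_rV [c [s [xcs sSi]]] _].
    exists (- c) => //; apply/esym/spread_indexE; first exact: v0.
    by rewrite /v xcs scaleNr addKr.
  by rewrite f_mx sub_capmx xH andbT (xE l) adds_rV_sub.
by rewrite card_imset // cardsT.
Qed.

Lemma spread_proj_cap_le1 i j : i != j ->
  (\rank (spread_proj i :&: spread_proj j) <= 1)%N.
Proof. by case: spreadS => _ disj ij; apply: mxrank_cap_cones_le1 pH (disj _ _ ij). Qed.

Lemma spread_proj_rank i : i != mx -> (g.-1 <= \rank (spread_proj i))%N.
Proof.
move=> imx; have [_ rSi] := spread_generator i.
have := mxrank_sum_cap (p + Sigma i)%MS H; have := rank_leq_col (p + Sigma i + H)%MS.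
by rewrite /spread_proj mxrank_adds_rV ?p_notin_spread // rSi rankH; lia.
Qed.

Lemma card_spread_proj_through_sub i x : i != mx -> x != 0 -> (x <= spread_proj i)%MS ->
  #|[set k | (k != mx) && (x <= spread_proj k)%MS]| = q.
Proof.
move=> imx x0; rewrite sub_capmx => /andP[/sub_adds_rV [c [s [xE sSi]]] xH].
have [sSigma_i _] := spread_generator i.
have pp : polar A p p = 0 by rewrite polarxx qform_p mulr0.
apply: card_spread_proj_through => //.
  have : polar A p x = polar A p s by rewrite xE polarDr polarZr pp mulr0 add0r.
  rewrite H_perp_p // xE qformD qformZ qform_p mulr0 add0r sSigma_i // add0r polarZl.
  by move=> <-; rewrite mulr0.
apply: contra pH => xSmx.
have s0 : s = 0.
  apply: (spread_eq0 imx sSi); have -> : s = x - c *: p by rewrite xE addrAC subrr add0r.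
  by rewrite -scaleNr addmx_sub ?scalemx_sub.
have c0 : c != 0 by apply: contra x0 => /eqP c0; rewrite xE s0 c0 scale0r addr0.
by rewrite -(scalerK c0 p) scalemx_sub // -(addr0 (c *: p)) -s0 -xE.
Qed.

(* Double count the pairs (x, k) with x a nonzero vector of Pi_i and x in Pi_k,
   k != i: by (iii) each x gives q - 1 indices k, by (i) each k gives at most
   q - 1 vectors x, and Pi_i has at least q^(g-1) - 1 = N - 1 nonzero vectors,
   as many as there are indices k; so every bound is attained. *)
Lemma spread_proj_meet : e = 0%N -> forall i j, i != mx -> j != mx -> i != j ->
  \rank (spread_proj i :&: spread_proj j) = 1%N.
Proof.
move=> e0 i j imx jmx ij; have [_ dimN] := spread_type_dims e_le2 r_odd.
have N_eq : N = (q ^ g.-1)%N by rewrite /spreadN dimN e0 addn0.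
have q_gt1 : (1 < q)%N := card_finNzRing_gt1 F.
pose X := rowg (spread_proj i) :\ 0.
pose J := ~: [set mx; i].
pose t k := #|rowg (spread_proj i :&: spread_proj k)%MS :\ 0|.
have t_le k : k \in J -> (t k <= q - 1)%N.
  rewrite !inE negb_or => /andP[_ ki]; rewrite /t card_rowgD1 leq_sub2r //.
  by rewrite -{2}(expn1 q) leq_pexp2l ?(ltnW q_gt1) ?spread_proj_cap_le1 // eq_sym.
have sum_t : (#|J| * (q - 1) <= \sum_(k in J) t k)%N.
  have -> : (\sum_(k in J) t k = \sum_(k in J) #|[set x in X | (x <= spread_proj k)%MS]|)%N.
    by apply: eq_bigr => k _; apply: eq_card => x; rewrite !inE sub_capmx andbA.
  rewrite double_count (eq_bigr (fun=> (q - 1)%N)) => [|x]; last first.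
    rewrite !inE => /andP[x0 xPi].
    have := cardsD1 i [set k | (k != mx) && (x <= spread_proj k)%MS].
    rewrite (card_spread_proj_through_sub imx x0 xPi) inE imx xPi add1n => ->.
    rewrite subn1 /=.
    by apply: eq_card => k; rewrite /J !inE negb_or; case: (k == i); case: (k == mx).
  rewrite sum_nat_const leq_mul2r; apply/orP; right.
  have := cardsC [set mx; i]; rewrite cards2 eq_sym imx card_ord -/J => cardJ.
  have := leq_pexp2l (ltnW q_gt1) (spread_proj_rank imx).
  by rewrite card_rowgD1 -N_eq; lia.
have : t j = (q - 1)%N.
  by apply: (sum_ubound_eq t_le sum_t); rewrite !inE negb_or jmx eq_sym ij.
have := spread_proj_cap_le1 ij; rewrite /t card_rowgD1.
case: (\rank _) => [|[|?]] // _; rewrite expn0 subnn => /esym/eqP.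
by rewrite subn_eq0 leqNgt q_gt1.
Qed.

End SpreadProjection.

Theorem mainTheorem3 (F : finFieldType) (e r : nat)
  (A : 'M[F]_(r + 3))
  (Sigma : 'I_((spreadN F r e).+1) -> 'M[F]_(r + 3))
  (p : 'rV[F]_(r + 3)) (H : 'M[F]_(r + 3)) :
  (e <= 2)%N ->
  odd r = (e != 1%N) ->
  quadric_of_type A e ->
  is_spread A e Sigma ->
  p != 0 -> (p <= Sigma ord_max)%MS ->
  \rank H = r.+1 ->
  (forall x : 'rV[F]_(r + 3), (x <= H)%MS -> polar A p x = 0) ->
  ~~ (p <= H)%MS ->
  let Pi := fun i => ((p + Sigma i) :&: H)%MS in
  [/\ (e = 1%N \/ e = 2%N) ->
        forall i j : 'I_((spreadN F r e).+1),
          i != ord_max -> j != ord_max -> i != j ->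
          (\rank (Pi i :&: Pi j)%MS <= 1)%N,
      e = 0%N -> (r %% 4 = 1)%N ->
        forall i j : 'I_((spreadN F r e).+1),
          i != ord_max -> j != ord_max -> i != j ->
          \rank (Pi i :&: Pi j)%MS = 1%N
    & forall x : 'rV[F]_(r + 3),
        x != 0 -> (x <= H)%MS -> qform A x = 0 -> ~~ (x <= Sigma ord_max)%MS ->
        #|[set i : 'I_((spreadN F r e).+1) | (i != ord_max) && (x <= Pi i)%MS]| = #|F|].
Proof.
move=> e_le2 r_odd typeA spreadS p0 pSmx rankH H_perp_p pH Pi; split.
- move=> _ i j _ _; exact: (spread_proj_cap_le1 (p := p) (H := H) spreadS pH).
- move=> e0 _; exact: spread_proj_meet e_le2 r_odd typeA spreadS p0 pSmx
    rankH H_perp_p pH e0.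
- exact: card_spread_proj_through e_le2 r_odd typeA spreadS p0 pSmx
    rankH H_perp_p pH.
Qed.
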